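(* Consider the partial differential equation, for real functions $\mu_t=\mu(t,x)$ and $\sigma_t=\sigma(t,x)>0$, $$\frac{\partial}{\partial x}\left[\frac{1}{\sigma_t}\frac{\partial\sigma_t}{\partial t}+\sigma_t\frac{\partial}{\partial x}\left(\frac12\frac{\partial\sigma_t}{\partial x}-\frac{\mu_t}{\sigma_t}\right)\right]=0.$$ Let $\tilde\sigma:[0,\infty)\to\mathbb{R}_+$. Then: 1. (L-class) If $\sigma(t,x)=\tilde\sigma(t)$, the general solution for the drift is $\mu(t,x)=\alpha(t)x+\beta(t)$, $x\in\mathbb{R}$, with $\alpha,\beta$ arbitrary real functions. 2. (G-class) If $\sigma(t,x)=\tilde\sigma(t)x$, the general solution for the drift is $\mu(t,x)=\alpha(t)x+\beta(t)x\log x$, $x\in\mathbb{R}_+$, with $\alpha,\beta$ arbitrary real functions. *)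

From Stdlib Require Export Reals.
From Coquelicot Require Export Coquelicot.
Open Scope R_scope.

Definition d_t (f : R -> R -> R) (t x : R) : R := Derive (fun s => f s x) t.
Definition d_x (f : R -> R -> R) (t x : R) : R := Derive (fun y => f t y) x.

Definition pde_inner (mu sigma : R -> R -> R) : R -> R -> R :=
  fun t x => / 2 * d_x sigma t x - mu t x / sigma t x.

Definition pde_bracket (mu sigma : R -> R -> R) : R -> R -> R :=
  fun t x => d_t sigma t x / sigma t x + sigma t x * d_x (pde_inner mu sigma) t x.

Definition solves_pde (mu sigma : R -> R -> R) (D : R -> Prop) : Prop :=
  forall t x, 0 <= t -> D x ->
    ex_derive (fun s => sigma s x) t /\
    ex_derive (fun y => sigma t y) x /\
    ex_derive (fun y => mu t y) x /\
    ex_derive (fun y => pde_inner mu sigma t y) x /\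
    ex_derive (fun y => pde_bracket mu sigma t y) x /\
    d_x (pde_bracket mu sigma) t x = 0.

(* For a separable volatility sigma(t,x) = s(t) phi(x) the term (d_t sigma)/sigma = s'/s does
   not depend on x, so the equation says that phi * d_x I is constant in x, where
   I = (1/2) d_x sigma - mu/sigma.  Hence I = c Phi + d with Phi' = 1/phi, and
   mu = sigma ((1/2) d_x sigma - I).  For phi = 1 (Phi = x) this gives the affine drifts, for
   phi = x (Phi = ln x) the drifts alpha x + beta x ln x; conversely, for such drifts the
   bracket is locally constant in x, so its x-derivative vanishes. *)
From Stdlib Require Import Reals Lra.
From Coquelicot Require Import Coquelicot.
Open Scope R_scope.

Definition is_interval (D : R -> Prop) : Prop :=
  forall a b x, D a -> D b -> a <= x <= b -> D x.

Lemma is_derive_eq_sub_const (D : R -> Prop) (f g f' : R -> R) a b :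
  is_interval D ->
  (forall x, D x -> is_derive f x (f' x)) ->
  (forall x, D x -> is_derive g x (f' x)) ->
  D a -> D b -> f b - g b = f a - g a.
Proof.
  intros HD Hf Hg Da Db.
  assert (Hfg : forall x, D x -> is_derive (fun y => f y - g y) x 0).
  { intros x Dx. replace 0 with (f' x - f' x) by ring.
    exact (is_derive_minus f g x _ _ (Hf x Dx) (Hg x Dx)). }
  destruct (Rtotal_order a b) as [Hab | [<- | Hba]].
  - symmetry. apply (eq_is_derive (fun y => f y - g y)); [|exact Hab].
    intros x Hx. apply Hfg, (HD a b); assumption.
  - reflexivity.
  - apply (eq_is_derive (fun y => f y - g y)); [|exact Hba].
    intros x Hx. apply Hfg, (HD b a); assumption.
Qed.

Lemma solves_pde_bracket_const mu sigma D t a b :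
  is_interval D -> solves_pde mu sigma D -> 0 <= t -> D a -> D b ->
  pde_bracket mu sigma t b = pde_bracket mu sigma t a.
Proof.
  intros HD Hsol Ht Da Db.
  assert (E := is_derive_eq_sub_const D (fun y => pde_bracket mu sigma t y)
                 (fun _ => 0) (fun _ => 0) a b HD).
  rewrite !Rminus_0_r in E. apply E; try assumption.
  - intros x Dx. destruct (Hsol t x Ht Dx) as (_ & _ & _ & _ & Hbr & Hbr0).
    rewrite <- Hbr0. exact (Derive_correct _ _ Hbr).
  - intros x _. apply (is_derive_const (V := R_NormedModule)).
Qed.

Lemma mu_of_pde_inner mu sigma t x : sigma t x <> 0 ->
  mu t x = sigma t x * (/ 2 * d_x sigma t x - pde_inner mu sigma t x).
Proof. intros Hs. unfold pde_inner. field. exact Hs. Qed.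

Section Separable.

Variables (s phi Phi : R -> R) (sigma : R -> R -> R) (D : R -> Prop).
Hypothesis Hsigma : forall t x, sigma t x = s t * phi x.
Hypothesis HD : is_interval D.
Hypothesis Hphi : forall x, D x -> phi x <> 0.
Hypothesis HPhi : forall x, D x -> is_derive Phi x (/ phi x).

Lemma separable_d_t t x : d_t sigma t x = Derive s t * phi x.
Proof.
  unfold d_t. rewrite (Derive_ext _ (fun r => s r * phi x)) by (intros; apply Hsigma).
  apply Derive_scal_l.
Qed.

Lemma separable_d_x t x : d_x sigma t x = s t * Derive phi x.
Proof.
  unfold d_x. rewrite (Derive_ext _ (fun y => s t * phi y)) by (intros; apply Hsigma).
  apply Derive_scal.
Qed.

Lemma separable_pde_bracket (mu : R -> R -> R) t x : s t <> 0 -> D x ->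
  pde_bracket mu sigma t x
  = Derive s t / s t + s t * (phi x * d_x (pde_inner mu sigma) t x).
Proof.
  intros Hs Dx. unfold pde_bracket. rewrite separable_d_t, Hsigma.
  field. auto.
Qed.

Lemma separable_pde_inner (mu : R -> R -> R) t a :
  solves_pde mu sigma D -> 0 <= t -> s t <> 0 -> D a ->
  exists c d, forall x, D x -> pde_inner mu sigma t x = c * Phi x + d.
Proof.
  intros Hsol Ht Hs Da.
  set (I := fun y => pde_inner mu sigma t y).
  set (c := phi a * Derive I a).
  assert (HI' : forall x, D x -> is_derive I x (c * / phi x)).
  { intros x Dx. destruct (Hsol t x Ht Dx) as (_ & _ & _ & HI & _).
    assert (Hbr := solves_pde_bracket_const mu sigma D t a x HD Hsol Ht Da Dx).
    rewrite !separable_pde_bracket in Hbr by assumption.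
    replace (c * / phi x) with (Derive I x).
    - exact (Derive_correct _ _ HI).
    - assert (Hc : phi x * Derive I x = c).
      { apply (Rmult_eq_reg_l (s t)); [|exact Hs]. unfold c, I, d_x in *. lra. }
      rewrite <- Hc. field. apply Hphi, Dx. }
  exists c, (I a - c * Phi a). intros x Dx.
  assert (E := is_derive_eq_sub_const D I (fun y => c * Phi y) (fun y => c * / phi y)
                 a x HD HI' (fun y Dy => is_derive_scal _ _ _ _ (HPhi y Dy)) Da Dx).
  unfold I in *. lra.
Qed.

Hypothesis HDopen : open D.

Lemma separable_inner_is_derive (mu : R -> R -> R) t c d x :
  (forall y, D y -> pde_inner mu sigma t y = c * Phi y + d) -> D x ->
  is_derive (fun y => pde_inner mu sigma t y) x (c * / phi x).
Proof.
  intros Hinner Dx. apply (is_derive_ext_loc (fun y => c * Phi y + d)).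
  - apply (locally_open D); [exact HDopen | | exact Dx].
    intros y Dy. symmetry. apply Hinner, Dy.
  - replace (c * / phi x) with (c * / phi x + 0) by ring.
    apply (is_derive_plus (fun y => c * Phi y) (fun _ => d)).
    + apply is_derive_scal, HPhi, Dx.
    + apply (is_derive_const (V := R_NormedModule)).
Qed.

Lemma separable_solves_pde (mu : R -> R -> R) :
  (forall t, 0 <= t -> s t <> 0) ->
  (forall t, 0 <= t -> ex_derive s t) ->
  (forall x, D x -> ex_derive phi x) ->
  (forall t x, 0 <= t -> D x -> ex_derive (fun y => mu t y) x) ->
  (forall t, 0 <= t -> exists c d, forall x, D x -> pde_inner mu sigma t x = c * Phi x + d) ->
  solves_pde mu sigma D.
Proof.
  intros Hs Hs' Hphi' Hmu Hinner t x Ht Dx.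
  destruct (Hinner t Ht) as (c & d & Hcd).
  assert (Hbr : forall y, D y -> pde_bracket mu sigma t y = Derive s t / s t + s t * c).
  { intros y Dy. rewrite separable_pde_bracket by auto.
    replace (d_x (pde_inner mu sigma) t y) with (c * / phi y)
      by (symmetry;
          exact (is_derive_unique _ _ _ (separable_inner_is_derive mu t c d y Hcd Dy))).
    field. split; [apply Hs, Ht | apply Hphi, Dy]. }
  assert (Hbr' : is_derive (fun y => pde_bracket mu sigma t y) x 0).
  { apply (is_derive_ext_loc (fun _ => Derive s t / s t + s t * c));
      [|apply (is_derive_const (V := R_NormedModule))].
    apply (locally_open D); [exact HDopen | | exact Dx].
    intros y Dy. symmetry. apply Hbr, Dy. }
  repeat split.
  - apply (ex_derive_ext (fun r => s r * phi x)); [intros; symmetry; apply Hsigma|].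
    apply ex_derive_mult; [apply Hs', Ht | apply ex_derive_const].
  - apply (ex_derive_ext (fun y => s t * phi y)); [intros; symmetry; apply Hsigma|].
    apply ex_derive_scal, Hphi', Dx.
  - apply Hmu; assumption.
  - eexists. exact (separable_inner_is_derive mu t c d x Hcd Dx).
  - eexists. exact Hbr'.
  - exact (is_derive_unique _ _ _ Hbr').
Qed.

End Separable.

Lemma affine_two_points (f : R -> R) :
  (exists A C, forall x, f x = A * x + C) ->
  forall x, f x = (f 1 - f 0) * x + f 0.
Proof. intros (A & C & Hf) x. rewrite !Hf. ring. Qed.

Lemma xlnx_two_points (f : R -> R) :
  (exists A C, forall x, 0 < x -> f x = A * x + C * x * ln x) ->
  forall x, 0 < x -> f x = f 1 * x + (f (exp 1) / exp 1 - f 1) * x * ln x.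
Proof.
  intros (A & C & Hf) x Hx. assert (He := exp_pos 1).
  rewrite !Hf by lra. rewrite ln_1, ln_exp. field. lra.
Qed.

Lemma is_interval_True : is_interval (fun _ => True).
Proof. intros _ _ _ _ _ _. exact I. Qed.

Lemma is_interval_pos : is_interval (fun x => 0 < x).
Proof. intros a b x Ha _ Hx. lra. Qed.

Lemma is_derive_id_inv_1 (x : R) : is_derive (fun y => y) x (/ 1).
Proof. auto_derive; [exact I | field]. Qed.

Section Classes.

Variable st : R -> R.
Hypothesis Hpos : forall t, 0 <= t -> 0 < st t.
Hypothesis Hdiff : forall t, 0 <= t -> ex_derive st t.

Let sigma_L : R -> R -> R := fun t _ => st t.
Let sigma_G : R -> R -> R := fun t x => st t * x.

Lemma sigma_L_separable t x : sigma_L t x = st t * (fun _ => 1) x.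
Proof. unfold sigma_L. ring. Qed.

Lemma sigma_G_separable t x : sigma_G t x = st t * id x.
Proof. reflexivity. Qed.

Lemma L_class_affine mu t : solves_pde mu sigma_L (fun _ => True) -> 0 <= t ->
  exists A C, forall x, mu t x = A * x + C.
Proof.
  intros Hsol Ht. assert (Hs := Hpos t Ht).
  destruct (separable_pde_inner st (fun _ => 1) (fun y => y) sigma_L (fun _ => True)
              sigma_L_separable is_interval_True (fun _ _ => R1_neq_R0)
              (fun x _ => is_derive_id_inv_1 x)
              mu t 0 Hsol Ht (Rgt_not_eq _ _ Hs) I) as (c & d & Hcd).
  exists (- st t * c), (- st t * d). intros x.
  rewrite (mu_of_pde_inner mu sigma_L) by (unfold sigma_L; lra).
  rewrite (Hcd x I). unfold d_x, sigma_L. rewrite Derive_const. ring.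
Qed.

Lemma G_class_xlnx mu t : solves_pde mu sigma_G (fun x => 0 < x) -> 0 <= t ->
  exists A C, forall x, 0 < x -> mu t x = A * x + C * x * ln x.
Proof.
  intros Hsol Ht. assert (Hs := Hpos t Ht).
  destruct (separable_pde_inner st id ln sigma_G (fun x => 0 < x)
              sigma_G_separable is_interval_pos (fun x Hx => Rgt_not_eq x 0 Hx) is_derive_ln
              mu t 1 Hsol Ht (Rgt_not_eq _ _ Hs) Rlt_0_1) as (c & d & Hcd).
  exists (st t * (st t / 2 - d)), (- st t * c). intros x Hx.
  rewrite (mu_of_pde_inner mu sigma_G) by (unfold sigma_G; nra).
  rewrite (Hcd x Hx), (separable_d_x st id sigma_G sigma_G_separable), Derive_id.
  unfold sigma_G. field.
Qed.

Lemma L_class_solves mu (alpha beta : R -> R) :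
  (forall t x, 0 <= t -> mu t x = alpha t * x + beta t) ->
  solves_pde mu sigma_L (fun _ => True).
Proof.
  intros Hmu.
  apply (separable_solves_pde st (fun _ => 1) (fun y => y) sigma_L (fun _ => True)
           sigma_L_separable (fun _ _ => R1_neq_R0) (fun x _ => is_derive_id_inv_1 x)
           open_true).
  - intros t Ht. exact (Rgt_not_eq _ _ (Hpos t Ht)).
  - exact Hdiff.
  - intros x _. apply ex_derive_const.
  - intros t x Ht _. apply (ex_derive_ext (fun y => alpha t * y + beta t)).
    + intros y. symmetry. apply Hmu, Ht.
    + auto_derive. exact I.
  - intros t Ht. assert (Hs := Hpos t Ht).
    exists (- alpha t / st t), (- beta t / st t). intros x _.
    unfold pde_inner, d_x, sigma_L. rewrite Derive_const, Hmu by exact Ht.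
    field. lra.
Qed.

Lemma G_class_solves mu (alpha beta : R -> R) :
  (forall t x, 0 <= t -> 0 < x -> mu t x = alpha t * x + beta t * x * ln x) ->
  solves_pde mu sigma_G (fun x => 0 < x).
Proof.
  intros Hmu.
  apply (separable_solves_pde st id ln sigma_G (fun x => 0 < x) sigma_G_separable
           (fun x Hx => Rgt_not_eq x 0 Hx) is_derive_ln (open_gt 0)).
  - intros t Ht. exact (Rgt_not_eq _ _ (Hpos t Ht)).
  - exact Hdiff.
  - intros x _. apply ex_derive_id.
  - intros t x Ht Hx. apply (ex_derive_ext_loc (fun y => alpha t * y + beta t * y * ln y)).
    + apply (locally_open (fun y => 0 < y)); [apply open_gt | | exact Hx].
      intros y Hy. symmetry. apply Hmu; assumption.
    + auto_derive. exact Hx.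
  - intros t Ht. assert (Hs := Hpos t Ht).
    exists (- beta t / st t), (st t / 2 - alpha t / st t). intros x Hx.
    unfold pde_inner. rewrite (separable_d_x st id sigma_G sigma_G_separable), Derive_id.
    unfold sigma_G. rewrite Hmu by assumption. field. lra.
Qed.

End Classes.

Theorem corollary6 (st : R -> R)
  (Hpos : forall t, 0 <= t -> 0 < st t)
  (Hdiff : forall t, 0 <= t -> ex_derive st t) :
  (forall mu : R -> R -> R,
     solves_pde mu (fun t _ => st t) (fun _ => True) <->
     exists alpha beta : R -> R,
       forall t x, 0 <= t -> mu t x = alpha t * x + beta t) /\
  (forall mu : R -> R -> R,
     solves_pde mu (fun t x => st t * x) (fun x => 0 < x) <->
     exists alpha beta : R -> R,
       forall t x, 0 <= t -> 0 < x -> mu t x = alpha t * x + beta t * x * ln x).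
Proof.
  split; intros mu; split.
  - intros Hsol. exists (fun t => mu t 1 - mu t 0), (fun t => mu t 0). intros t x Ht.
    exact (affine_two_points (mu t) (L_class_affine st Hpos mu t Hsol Ht) x).
  - intros (alpha & beta & Hmu). exact (L_class_solves st Hpos Hdiff mu alpha beta Hmu).
  - intros Hsol. exists (fun t => mu t 1), (fun t => mu t (exp 1) / exp 1 - mu t 1).
    intros t x Ht Hx.
    exact (xlnx_two_points (mu t) (G_class_xlnx st Hpos mu t Hsol Ht) x Hx).
  - intros (alpha & beta & Hmu). exact (G_class_solves st Hpos Hdiff mu alpha beta Hmu).
Qed.
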